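(* Let $r\in[2,+\infty)$ and $h_0>0$. Let $Z\in L^r_{\mathbb{R}^q}(\mathbb{P})$ with $\mathbb{E}Z=0$, $a\in\mathbb{R}^d$ and $A\in\mathcal{M}(d,q,\mathbb{R})$. Then for every $h\in(0,h_0)$, $$\mathbb{E}\big|a+\sqrt h\,AZ\big|^r\le|a|^r(1+c^{(1)}_rh)+c^{(2)}_{r,h_0}\,h\,\|A\|^r\,\mathbb{E}|Z|^r,$$ where $c^{(1)}_r=2^{(r-3)_+}\frac{(r-1)(r-2)}{2}$, $c^{(2)}_{r,h_0}=2^{(r-3)_+}(r-1)\big(1+\frac r2h_0^{\frac r2-1}\big)$ and $\|A\|$ is the operator norm of $A$.
   Context: $|\cdot|$ denotes the Euclidean norm and $(x)_+=\max(x,0)$. *)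

From HB Require Import structures.
From mathcomp Require Import all_boot all_order all_algebra.
From mathcomp Require Import all_classical all_reals all_analysis.
Set Implicit Arguments. Unset Strict Implicit. Unset Printing Implicit Defensive.
Import Order.TTheory GRing.Theory Num.Theory.
Local Open Scope ring_scope.
Local Open Scope classical_set_scope.

Definition eucl {R : realType} {n : nat} (v : 'cV[R]_n) : R :=
  Num.sqrt (\sum_(i < n) v i ord0 ^+ 2).

Definition opnorm {R : realType} {d q : nat} (A : 'M[R]_(d, q)) : R :=
  sup [set eucl (A *m x) | x in [set x : 'cV[R]_q | eucl x <= 1]].

Definition pos_part {R : realType} (x : R) : R := Num.max x 0.

Definition c1 {R : realType} (r : R) : R :=
  2 `^ pos_part (r - 3) * ((r - 1) * (r - 2) / 2).

Definition c2 {R : realType} (r h0 : R) : R :=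
  2 `^ pos_part (r - 3) * (r - 1) * (1 + r / 2 * h0 `^ (r / 2 - 1)).

From HB Require Import structures.
From mathcomp Require Import all_boot all_order all_algebra.
From mathcomp Require Import all_classical all_reals all_analysis.
From mathcomp Require Import measurable_realfun ring lra.
Import Order.TTheory GRing.Theory Num.Theory.
Local Open Scope ring_scope.
Local Open Scope classical_set_scope.

(* Write s = |a|, u = sqrt h A z, v = |u| and b = <a, u>.  Along the segment
   t |-> a + t u, the function t |-> |a + t u|^r has derivative r s^(r-2) b at 0 and
   second derivative at most r (r-1) (s + v)^(r-2) v^2, while
   (s + v)^(r-2) <= 2^((r-3)_+) (s^(r-2) + v^(r-2)).  Taylor's formula therefore gives
     |a + u|^r <= s^r + r s^(r-2) b + r (r-1)/2 2^((r-3)_+) (s^(r-2) v^2 + v^r).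
   Young's inequality splits s^(r-2) v^2 = h s^(r-2) |A z|^2 into multiples of s^r and
   |A z|^r, and v^r = h^(r/2) |A z|^r <= h h0^(r/2-1) ||A||^r |z|^r.  Taking expectations
   at z = Z, the first-order term r s^(r-2) <a, sqrt h A Z> vanishes because E Z = 0. *)

Section euclidean.
Context {R : realType}.

Definition dotmx {n} (x y : 'cV[R]_n) : R := \sum_(i < n) x i ord0 * y i ord0.

Lemma dotmx_ge0 {n} (x : 'cV[R]_n) : 0 <= dotmx x x.
Proof. by apply: sumr_ge0 => i _; rewrite -expr2 sqr_ge0. Qed.

Lemma dotmxZl {n} (t : R) (x y : 'cV[R]_n) : dotmx (t *: x) y = t * dotmx x y.
Proof. by rewrite /dotmx mulr_sumr; apply: eq_bigr => i _; rewrite mxE mulrA. Qed.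

Lemma dotmx_addZ {n} (x y : 'cV[R]_n) (t : R) :
  dotmx (x + t *: y) (x + t *: y) = dotmx x x + 2 * t * dotmx x y + t ^+ 2 * dotmx y y.
Proof.
rewrite /dotmx !mulr_sumr -!big_split /=.
by apply: eq_bigr => i _; rewrite !mxE; ring.
Qed.

Lemma dotmx_mulmx {m n} (a : 'cV[R]_m) (B : 'M[R]_(m, n)) (z : 'cV[R]_n) :
  dotmx a (B *m z) = ((a^T *m B) *m z) ord0 ord0.
Proof. by rewrite -mulmxA mxE; apply: eq_bigr => i _; rewrite [a^T _ _]mxE. Qed.

Lemma dotmx_eq0 {n} (x : 'cV[R]_n) : dotmx x x = 0 -> x = 0.
Proof.
move=> /psumr_eq0P x0; apply/matrixP => i j; rewrite (ord1 j) mxE.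
apply/eqP; rewrite -sqrf_eq0 expr2; apply/eqP/x0 => // k _.
by rewrite -expr2 sqr_ge0.
Qed.

Lemma dotmx_sqr_le {n} (x y : 'cV[R]_n) : dotmx x y ^+ 2 <= dotmx x x * dotmx y y.
Proof.
have [/dotmx_eq0 ->|y0] := eqVneq (dotmx y y) 0.
  have dot0 w : dotmx w (0 : 'cV_n) = 0 by rewrite /dotmx big1 // => i _; rewrite mxE mulr0.
  by rewrite !dot0 expr0n mulr0.
have yp : 0 < dotmx y y by rewrite lt_neqAle eq_sym y0 dotmx_ge0.
have := dotmx_ge0 (x - (dotmx x y / dotmx y y) *: y).
rewrite -scaleNr dotmx_addZ => h.
have E : dotmx y y * (dotmx x x + 2 * - (dotmx x y / dotmx y y) * dotmx x y
    + (- (dotmx x y / dotmx y y)) ^+ 2 * dotmx y y)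
  = dotmx y y * dotmx x x - dotmx x y ^+ 2 by field.
have := mulr_ge0 (ltW yp) h; rewrite E; lra.
Qed.

Lemma euclE {n} (x : 'cV[R]_n) : eucl x = Num.sqrt (dotmx x x).
Proof. by rewrite /eucl; under eq_bigr do rewrite expr2. Qed.

Lemma eucl_ge0 {n} (x : 'cV[R]_n) : 0 <= eucl x.
Proof. exact: sqrtr_ge0. Qed.

Lemma eucl_sqr {n} (x : 'cV[R]_n) : eucl x ^+ 2 = dotmx x x.
Proof. by rewrite euclE sqr_sqrtr // dotmx_ge0. Qed.

Lemma eucl_powR {n} (x : 'cV[R]_n) (r : R) : eucl x `^ r = dotmx x x `^ (r / 2).
Proof. by rewrite euclE -powR12_sqrt ?dotmx_ge0 // -powRrM mulrC. Qed.

Lemma euclZ {n} (t : R) (x : 'cV[R]_n) : eucl (t *: x) = `|t| * eucl x.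
Proof.
rewrite !euclE dotmxZl (_ : dotmx x (t *: x) = t * dotmx x x).
  by rewrite mulrA -expr2 sqrtrM ?sqr_ge0 // sqrtr_sqr.
by rewrite /dotmx mulr_sumr; apply: eq_bigr => i _; rewrite mxE mulrCA.
Qed.

Lemma eucl0 {n} : eucl (0 : 'cV[R]_n) = 0.
Proof. by rewrite -(scale0r 0) euclZ normr0 mul0r. Qed.

Lemma eucl_eq0 {n} (x : 'cV[R]_n) : eucl x = 0 -> x = 0.
Proof. by move=> x0; apply: dotmx_eq0; rewrite -eucl_sqr x0 expr0n. Qed.

Lemma normr_coord_le_eucl {n} (x : 'cV[R]_n) i : `|x i ord0| <= eucl x.
Proof.
rewrite euclE -(sqrtr_sqr (x i ord0)) ler_wsqrtr // /dotmx (bigD1 i) //= -expr2.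
by rewrite lerDl sumr_ge0 // => j _; rewrite -expr2 sqr_ge0.
Qed.

Lemma eucl_le_sqrt_sum {n} (x : 'cV[R]_n) (B : 'I_n -> R) :
  (forall i, `|x i ord0| <= B i) -> eucl x <= Num.sqrt (\sum_i B i ^+ 2).
Proof.
move=> xB; rewrite euclE ler_wsqrtr // ler_sum // => i _.
rewrite -expr2 -real_normK ?num_real // lerXn2r ?nnegrE //.
exact: le_trans (xB i).
Qed.

Definition opnorm_set {d q} (A : 'M[R]_(d, q)) :=
  [set eucl (A *m x) | x in [set x : 'cV[R]_q | eucl x <= 1]].

Lemma opnorm_set0 {d q} (A : 'M[R]_(d, q)) : opnorm_set A 0.
Proof. by exists 0; rewrite /= ?mulmx0 eucl0. Qed.

Lemma has_sup_opnorm_set {d q} (A : 'M[R]_(d, q)) : has_sup (opnorm_set A).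
Proof.
split; first by exists 0; apply: opnorm_set0.
exists (Num.sqrt (\sum_(i < d) (\sum_(j < q) `|A i j|) ^+ 2)).
move=> _ [x /= x1 <-]; apply: eucl_le_sqrt_sum => i.
rewrite mxE (le_trans (ler_norm_sum _ _ _)) // ler_sum // => j _.
rewrite normrM ler_piMr //; exact: le_trans (normr_coord_le_eucl x j) x1.
Qed.

Lemma opnorm_ge0 {d q} (A : 'M[R]_(d, q)) : 0 <= opnorm A.
Proof. exact: sup_upper_bound (has_sup_opnorm_set A) _ (opnorm_set0 A). Qed.

Lemma eucl_mulmx_le {d q} (A : 'M[R]_(d, q)) (x : 'cV[R]_q) :
  eucl (A *m x) <= opnorm A * eucl x.
Proof.
have [/eucl_eq0 ->|x0] := eqVneq (eucl x) 0; first by rewrite mulmx0 !eucl0 mulr0.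
have xp : 0 < eucl x by rewrite lt_neqAle eq_sym x0 eucl_ge0.
rewrite -ler_pdivrMr // mulrC -[_^-1]ger0_norm ?invr_ge0 ?eucl_ge0 // -euclZ scalemxAr.
apply: sup_upper_bound (has_sup_opnorm_set A) _ _.
by exists ((eucl x)^-1 *: x); rewrite //= euclZ ger0_norm ?invr_ge0 ?eucl_ge0 // mulVf.
Qed.

End euclidean.

Section real_powers.
Context {R : realType}.

Lemma is_derive_powR_comp (p : R) {f : R -> R} {x df : R} :
  0 < f x -> is_derive x 1 f df ->
  is_derive x 1 (fun y => f y `^ p) (p * f x `^ (p - 1) * df).
Proof. by move=> fx0 fd; exact: is_derive1_comp (is_derive1_powR p fx0) fd. Qed.

Lemma ger0_is_derive_le (f df : R -> R) (a b : R) : a <= b ->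
  (forall x, a <= x <= b -> is_derive x 1 f (df x)) ->
  (forall x, a <= x <= b -> 0 <= df x) -> f a <= f b.
Proof.
move=> ab fd df0.
have fab x : x \in `]a, b[%R -> a <= x <= b.
  by rewrite in_itv /= => /andP[ax xb]; rewrite !ltW.
apply: (@ger0_derive1_ndecr _ f a b) => // [x /fab /fd []//|x /fab xab|].
  by have fdx := fd x xab; rewrite derive1E derive_val df0.
by apply: derivable_within_continuous => x; rewrite in_itv => /fd [].
Qed.

Lemma powR_sqr (x p : R) : 0 <= x -> (x ^+ 2) `^ p = x `^ (2 * p).
Proof. by move=> x0; rewrite powRrM powR_mulrn. Qed.

Lemma powRD2 (x p : R) : 0 <= x -> p + 2 != 0 -> x `^ (p + 2) = x `^ p * x ^+ 2.
Proof. by move=> x0 p2; rewrite powRD ?(negbTE p2) // powR_mulrn. Qed.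

Lemma powR_mul_ratio_le (x t p : R) : 0 <= x -> 0 < t -> x <= t -> p <= 1 ->
  t `^ p * (x / t) <= x `^ p.
Proof.
move=> x0 t0 xt p1.
rewrite -{2}(divfK (negbT (gt_eqF t0)) x) mulrC powRM ?divr_ge0 ?(ltW t0) //.
rewrite ler_wpM2r ?powR_ge0 //.
have [->|x_neq0] := eqVneq x 0; first by rewrite mul0r powR_ge0.
apply: ger1_powR => //; rewrite divr_gt0 ?ler_pdivrMr ?mul1r //.
by rewrite lt0r x_neq0.
Qed.

Lemma powR_addr_le (x y p : R) : 0 <= x -> 0 <= y -> 0 <= p ->
  (x + y) `^ p <= 2 `^ pos_part (p - 1) * (x `^ p + y `^ p).
Proof.
move=> x0 y0 p0; rewrite /pos_part.
have [p1|p1] := lerP (p - 1) 0.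
  rewrite powRr0 mul1r.
  have [xy0|xy_neq0] := eqVneq (x + y) 0.
    have [-> ->] : x = 0 /\ y = 0 by split; lra.
    by rewrite addr0 lerDl powR_ge0.
  have xyp : 0 < x + y by rewrite lt_neqAle eq_sym xy_neq0 addr_ge0.
  rewrite -{1}[_ `^ p]mulr1 -(divff xy_neq0) mulrDl mulrDr.
  by rewrite lerD // powR_mul_ratio_le //; lra.
have half : (2^-1 * x + 2^-1 * y) `^ p <= 2^-1 * x `^ p + 2^-1 * y `^ p.
  rewrite {2 4}(_ : 2^-1 = 1 - 2^-1 :> R); last by rewrite {2}(splitr 1) div1r addrK.
  apply: (convex_powR _ (Itv01 _ _)); rewrite ?inE /= ?in_itv /= ?andbT //; lra.
have mid : x + y = 2 * (2^-1 * x + 2^-1 * y) by field.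
have pow2 : 2 `^ p = 2 `^ (p - 1) * 2 :> R by rewrite mulrC mulr_powRB1 //; lra.
rewrite mid powRM ?pow2 -?mulrA ?ler_wpM2l ?powR_ge0 //; lra.
Qed.

Lemma powR2_pos_part_ge1 (x : R) : 1 <= 2 `^ pos_part x.
Proof.
rewrite -[leLHS](powRr0 2); apply: ler_powR; first by rewrite ler1n.
by rewrite /pos_part le_max lexx orbT.
Qed.

Lemma young_powR_sqr (s w r : R) : 0 <= s -> 0 <= w -> 2 <= r ->
  s `^ (r - 2) * w ^+ 2 <= (r - 2) / r * s `^ r + 2 / r * w `^ r.
Proof.
move=> s0 w0 r2.
have [->|r_neq2] := eqVneq r 2.
  by rewrite subrr powRr0 mul1r !mul0r add0r divff ?pnatr_eq0 // mul1r powR_mulrn.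
have r_gt2 : 2 < r by rewrite lt_neqAle eq_sym r_neq2.
have := @conjugate_powR R (s `^ (r - 2)) (w ^+ 2) (r / (r - 2)) (r / 2)
  (powR_ge0 _ _) (sqr_ge0 _).
rewrite -powRrM powR_sqr // (_ : (r - 2) * (r / (r - 2)) = r); last by field; lra.
rewrite (_ : 2 * (r / 2) = r); last by field.
rewrite (_ : s `^ r / (r / (r - 2)) = (r - 2) / r * s `^ r); last by field; lra.
rewrite (_ : w `^ r / (r / 2) = 2 / r * w `^ r); last by field; lra.
by apply; rewrite ?divr_gt0 //; try lra; field; lra.
Qed.

End real_powers.

Section quadratic_taylor.
Context {R : realType}.
Variables (s b v r M : R).

(* With s = |a|, b = <a, u> and v = |u|, Q t is |a + t u|^2; M bounds Q^(r/2-1) on [0, 1]. *)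
Local Notation Q t := (s ^+ 2 + 2 * b * t + v ^+ 2 * t ^+ 2).

Lemma is_derive_quadratic (t : R) : is_derive t 1 (fun t => Q t) (2 * (b + v ^+ 2 * t)).
Proof. by apply: is_derive_eq; rewrite /GRing.scale /= ?mulr1; ring. Qed.

(* The derivative of the Taylor remainder in quadratic_powR_taylor is r times the gap in
   this inequality; the gap vanishes at 0 and is nondecreasing since
   (b + v^2 t)^2 <= v^2 Q t (Cauchy-Schwarz) and 2 (r/2 - 1) + 1 = r - 1. *)
Lemma quadratic_powR_deriv_le (t : R) : 2 <= r -> 0 <= s ->
  b ^+ 2 <= s ^+ 2 * v ^+ 2 ->
  (forall t, 0 <= t <= 1 -> 0 < Q t) -> (forall t, 0 <= t <= 1 -> Q t `^ (r / 2 - 1) <= M) ->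
  0 <= t <= 1 ->
  Q t `^ (r / 2 - 1) * (b + v ^+ 2 * t) <= b * s `^ (r - 2) + (r - 1) * M * v ^+ 2 * t.
Proof.
move=> r2 s0 bsv Q_gt0 Q_powR_le /andP[t0 t1]; set e := r / 2 - 1.
have e0 : 0 <= e by rewrite /e; lra.
pose H t := b * s `^ (r - 2) + (r - 1) * M * v ^+ 2 * t - Q t `^ e * (b + v ^+ 2 * t).
pose dH t := (r - 1) * M * v ^+ 2
  - (e * Q t `^ (e - 1) * (2 * (b + v ^+ 2 * t)) * (b + v ^+ 2 * t) + Q t `^ e * v ^+ 2).
have H0 : H 0 = 0.
  by rewrite /H !(mulr0, addr0, expr0n) powR_sqr // /e (_ : 2 * _ = r - 2); [ring | field].
suff : H 0 <= H t by rewrite H0 subr_ge0.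
apply: (@ger0_is_derive_le _ H dH 0 t t0) => x /andP[x0 xt];
  have xI : 0 <= x <= 1 by rewrite x0; lra.
  have Qd := is_derive_powR_comp e (f := fun t => Q t) (Q_gt0 _ xI) (is_derive_quadratic x).
  by apply: is_derive_eq; rewrite /dH /GRing.scale /= ?mulr1; ring.
have Qx := Q_gt0 _ xI.
have Q_pow : Q x `^ e = Q x `^ (e - 1) * Q x.
  have := @powRD R (Q x) (e - 1) 1; rewrite subrK powRr1 ?(ltW Qx) //; apply.
  by apply/implyP => _; rewrite gt_eqF.
have lin_sqr : (b + v ^+ 2 * x) ^+ 2 <= v ^+ 2 * Q x.
  by rewrite -subr_ge0 (_ : _ - _ = s ^+ 2 * v ^+ 2 - b ^+ 2) ?subr_ge0 //; ring.
have first_le : 2 * e * Q x `^ (e - 1) * (b + v ^+ 2 * x) ^+ 2 <= 2 * e * v ^+ 2 * Q x `^ e.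
  rewrite Q_pow (_ : 2 * e * v ^+ 2 * _ = 2 * e * Q x `^ (e - 1) * (v ^+ 2 * Q x)).
    by rewrite ler_wpM2l // !mulr_ge0 ?powR_ge0.
  by ring.
have -> : dH x = (2 * e + 1) * v ^+ 2 * (M - Q x `^ e)
    + (2 * e * v ^+ 2 * Q x `^ e - 2 * e * Q x `^ (e - 1) * (b + v ^+ 2 * x) ^+ 2).
  by rewrite /dH (_ : r - 1 = 2 * e + 1); [ring | rewrite /e; field].
by rewrite addr_ge0 ?subr_ge0 // mulr_ge0 ?subr_ge0 ?Q_powR_le // mulr_ge0 ?sqr_ge0 //; lra.
Qed.

Lemma quadratic_powR_taylor : 2 <= r -> 0 <= s -> b ^+ 2 <= s ^+ 2 * v ^+ 2 ->
  (forall t, 0 <= t <= 1 -> 0 < Q t) -> (forall t, 0 <= t <= 1 -> Q t `^ (r / 2 - 1) <= M) ->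
  Q 1 `^ (r / 2) <= s `^ r + r * b * s `^ (r - 2) + r * (r - 1) / 2 * M * v ^+ 2.
Proof.
move=> r2 s0 bsv Q_gt0 Q_powR_le.
pose G t := s `^ r + r * b * s `^ (r - 2) * t + r * (r - 1) / 2 * M * v ^+ 2 * t ^+ 2
  - Q t `^ (r / 2).
have G0 : G 0 = 0.
  by rewrite /G !(mulr0, addr0, expr0n) powR_sqr // mulrC divfK ?subrr.
suff : G 0 <= G 1 by rewrite G0 /G !(mulr1, expr1n) subr_ge0.
apply: (@ger0_is_derive_le _ G (fun t => r * (b * s `^ (r - 2) + (r - 1) * M * v ^+ 2 * t
    - Q t `^ (r / 2 - 1) * (b + v ^+ 2 * t))) 0 1 ler01) => t tI.
  have Qd := is_derive_powR_comp (r / 2) (f := fun t => Q t) (Q_gt0 _ tI) (is_derive_quadratic t).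
  by apply: is_derive_eq; rewrite /GRing.scale /= ?mulr1; field.
by rewrite mulr_ge0 ?subr_ge0 ?quadratic_powR_deriv_le //; lra.
Qed.

End quadratic_taylor.

Section pointwise.
Context {R : realType}.

Lemma collinear_powR_taylor (t v r M : R) : 0 <= t <= 1 -> 0 <= v -> 2 <= r ->
  (t * v) `^ (r - 2) + v `^ (r - 2) <= M ->
  ((1 - t) * v) `^ r <= (t * v) `^ r + r * (- t * v ^+ 2) * (t * v) `^ (r - 2)
                        + r * (r - 1) / 2 * M * v ^+ 2.
Proof.
move=> /andP[t0 t1] v0 r2 leM; set s := t * v.
have r_neq0 : r != 0 by rewrite gt_eqF //; lra.
have split_pow x : 0 <= x -> x `^ r = x `^ (r - 2) * x ^+ 2.
  by move=> x0; rewrite -powRD2 ?subrK.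
have lhs_le : ((1 - t) * v) `^ r <= v `^ r.
  by rewrite ge0_ler_powR ?nnegrE ?mulr_ge0 ?subr_ge0 ?ler_piMl //; lra.
have C_ge1 : 1 <= r * (r - 1) / 2 by rewrite ler_pdivlMr // mul1r; nra.
have quad_ge0 : 0 <= t ^+ 2 - r * t + r * (r - 1) / 2.
  have := sqr_ge0 (t - r / 2); have : 0 <= r * (r - 2) by rewrite mulr_ge0; lra.
  nra.
have -> : s `^ r + r * (- t * v ^+ 2) * s `^ (r - 2) + r * (r - 1) / 2 * M * v ^+ 2
    = s `^ (r - 2) * v ^+ 2 * (t ^+ 2 - r * t + r * (r - 1) / 2)
      + r * (r - 1) / 2 * (M - (s `^ (r - 2) + v `^ (r - 2))) * v ^+ 2
      + r * (r - 1) / 2 * v `^ r.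
  by rewrite (split_pow v) // (split_pow s) ?mulr_ge0 // /s exprMn; ring.
apply: (le_trans lhs_le); rewrite -addrA ler_wpDl ?mulr_ge0 ?powR_ge0 ?sqr_ge0 //.
rewrite ler_wpDl ?ler_peMl ?powR_ge0 //.
by rewrite mulr_ge0 ?sqr_ge0 // mulr_ge0 ?subr_ge0 //; lra.
Qed.

Lemma eucl_addr_powR_taylor {n} (a u : 'cV[R]_n) (r : R) : 2 <= r ->
  eucl (a + u) `^ r <= eucl a `^ r + r * dotmx a u * eucl a `^ (r - 2)
    + r * (r - 1) / 2 * (2 `^ pos_part (r - 3) * (eucl a `^ (r - 2) + eucl u `^ (r - 2)))
      * eucl u ^+ 2.
Proof.
move=> r2.
(* powR is not differentiable at 0, so a segment from a to a + u through 0 is handled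
   by direct computation. *)
have [[t0 /andP[t00 t01] a_eq]|a_tu_neq0] :=
  pselect (exists2 t0 : R, 0 <= t0 <= 1 & a + t0 *: u = 0).
  have -> : a = - t0 *: u by rewrite scaleNr -(addrK (t0 *: u) a) a_eq sub0r.
  have -> : - t0 *: u + u = (1 - t0) *: u by rewrite scalerBl scale1r addrC scaleNr.
  rewrite euclZ dotmxZl euclZ normrN !ger0_norm -?eucl_sqr; try lra.
  apply: collinear_powR_taylor; rewrite ?t00 ?eucl_ge0 //.
  by rewrite ler_peMl ?powR2_pos_part_ge1 // addr_ge0 ?powR_ge0.
have Q_eq t : dotmx (a + t *: u) (a + t *: u)
    = eucl a ^+ 2 + 2 * dotmx a u * t + eucl u ^+ 2 * t ^+ 2.
  by rewrite dotmx_addZ !eucl_sqr; ring.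
have bsv : dotmx a u ^+ 2 <= eucl a ^+ 2 * eucl u ^+ 2 by rewrite !eucl_sqr dotmx_sqr_le.
rewrite -{1}(scale1r u) eucl_powR Q_eq.
apply: quadratic_powR_taylor; rewrite ?eucl_ge0 // => t /andP[t0 t1].
  rewrite lt0r -Q_eq dotmx_ge0 andbT; apply/eqP => /dotmx_eq0 Q0.
  by apply: a_tu_neq0; exists t => //; rewrite t0.
set s := eucl a; set v := eucl u; set b := dotmx a u.
have s0 : 0 <= s := eucl_ge0 a.
have v0 : 0 <= v := eucl_ge0 u.
have Q_le : s ^+ 2 + 2 * b * t + v ^+ 2 * t ^+ 2 <= (s + v) ^+ 2.
  have : b * t <= s * v.
    have b_le : `|b| <= s * v.
      by rewrite -ler_sqr ?nnegrE ?mulr_ge0 // real_normK ?num_real // exprMn.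
    by apply: le_trans b_le; rewrite (le_trans (ler_norm _)) // normrM (ger0_norm t0) ler_piMr.
  have : t ^+ 2 <= 1 by rewrite expr_le1.
  nra.
apply: (le_trans (ge0_ler_powR _ _ _ Q_le)); rewrite ?nnegrE -?Q_eq ?dotmx_ge0 ?sqr_ge0 //;
  try lra.
rewrite powR_sqr ?addr_ge0 // (_ : 2 * (r / 2 - 1) = r - 2); last by field.
by rewrite (_ : r - 3 = r - 2 - 1); [rewrite powR_addr_le //; lra | ring].
Qed.

Lemma c2_ge0 (r h0 : R) : 1 <= r -> 0 <= h0 -> 0 <= c2 r h0.
Proof.
move=> r1 h0_ge0; have r_ge0 : 0 <= r / 2 by lra.
by rewrite !mulr_ge0 ?powR_ge0 ?subr_ge0 // addr_ge0 // mulr_ge0 ?powR_ge0.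
Qed.

Lemma taylor_remainder_sqrt_le (s w r h0 h : R) : 0 <= s -> 0 <= w -> 2 <= r ->
  0 <= h <= h0 ->
  r * (r - 1) / 2 * (2 `^ pos_part (r - 3) * (s `^ (r - 2) + (Num.sqrt h * w) `^ (r - 2)))
    * (Num.sqrt h * w) ^+ 2 <= s `^ r * (c1 r * h) + c2 r h0 * h * w `^ r.
Proof.
move=> s0 w0 r2 /andP[h_ge0 hh0]; set K := 2 `^ _.
have r_neq0 : r != 0 by rewrite gt_eqF //; lra.
have e_ge0 : 0 <= r / 2 - 1 by lra.
have C_ge0 : 0 <= r * (r - 1) / 2 * K.
  by rewrite !mulr_ge0 ?powR_ge0 //; lra.
have young : s `^ (r - 2) * (Num.sqrt h * w) ^+ 2
    <= h * ((r - 2) / r * s `^ r + 2 / r * w `^ r).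
  by rewrite exprMn sqr_sqrtr // mulrCA ler_wpM2l ?young_powR_sqr.
have high_pow : (Num.sqrt h * w) `^ (r - 2) * (Num.sqrt h * w) ^+ 2
    <= h * h0 `^ (r / 2 - 1) * w `^ r.
  rewrite -powRD2 ?mulr_ge0 ?sqrtr_ge0 ?subrK //.
  have h_pow : h `^ (r / 2) = h * h `^ (r / 2 - 1) by rewrite mulr_powRB1 //; lra.
  rewrite powRM ?sqrtr_ge0 // -powR12_sqrt // -powRrM (mulrC 2^-1) h_pow.
  by rewrite ler_wpM2r ?powR_ge0 // ler_wpM2l // ge0_ler_powR ?nnegrE // (le_trans h_ge0).
rewrite (_ : _ * _ * _ ^+ 2 = r * (r - 1) / 2 * K * (s `^ (r - 2) * (Num.sqrt h * w) ^+ 2)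
  + r * (r - 1) / 2 * K * ((Num.sqrt h * w) `^ (r - 2) * (Num.sqrt h * w) ^+ 2)); last by ring.
rewrite (_ : s `^ r * _ + _ = r * (r - 1) / 2 * K * (h * ((r - 2) / r * s `^ r + 2 / r * w `^ r))
  + r * (r - 1) / 2 * K * (h * h0 `^ (r / 2 - 1) * w `^ r)); last by rewrite /c1 /c2 -/K; field.
exact: lerD (ler_wpM2l C_ge0 young) (ler_wpM2l C_ge0 high_pow).
Qed.

Lemma eucl_add_sqrt_mulmx_powR_le {d q} (a : 'cV[R]_d) (A : 'M[R]_(d, q))
    (z : 'cV[R]_q) (r h0 h : R) : 2 <= r -> 0 <= h <= h0 ->
  eucl (a + Num.sqrt h *: (A *m z)) `^ r <= eucl a `^ r * (1 + c1 r * h)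
    + r * dotmx a (Num.sqrt h *: (A *m z)) * eucl a `^ (r - 2)
    + c2 r h0 * h * opnorm A `^ r * eucl z `^ r.
Proof.
move=> r2 hI; have /andP[h_ge0 hh0] := hI.
have c2h_ge0 : 0 <= c2 r h0 * h by rewrite mulr_ge0 ?c2_ge0 ?(le_trans h_ge0) //; lra.
have w_le : eucl (A *m z) `^ r <= opnorm A `^ r * eucl z `^ r.
  rewrite -powRM ?opnorm_ge0 ?eucl_ge0 // ge0_ler_powR ?nnegrE ?eucl_mulmx_le //;
    by rewrite ?mulr_ge0 ?opnorm_ge0 ?eucl_ge0 //; lra.
apply: (le_trans (eucl_addr_powR_taylor _ _ _ r2)).
rewrite euclZ ger0_norm ?sqrtr_ge0 // -addrA.
set s := eucl a; set lin := r * dotmx _ _ * _.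
rewrite [leRHS](_ : _ = s `^ r + lin
    + (s `^ r * (c1 r * h) + c2 r h0 * h * (opnorm A `^ r * eucl z `^ r))); last by ring.
rewrite -addrA !lerD2l.
apply: le_trans (taylor_remainder_sqrt_le _ _ _ _ _ (eucl_ge0 a) (eucl_ge0 _) r2 hI) _.
by rewrite lerD2l ler_wpM2l.
Qed.

End pointwise.

Section integration.
Context {R : realType} {dT : measure_display} {T : measurableType dT}.

Lemma measurable_coord_mulmx {m n} (B : 'M[R]_(m, n)) (Z : T -> 'cV[R]_n) :
  (forall j, measurable_fun setT (fun w => Z w j ord0)) ->
  forall i, measurable_fun setT (fun w => (B *m Z w) i ord0).
Proof.
move=> mZ i; rewrite (_ : (fun w => _) = (fun w => \sum_j B i j * Z w j ord0)).
  by apply: measurable_sum => j; apply: measurable_funM => //; exact: measurable_cst.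
by apply/funext => w; rewrite mxE.
Qed.

Lemma measurable_eucl_powR {n} (X : T -> 'cV[R]_n) (r : R) :
  (forall i, measurable_fun setT (fun w => X w i ord0)) ->
  measurable_fun setT (fun w => eucl (X w) `^ r).
Proof.
move=> mX; rewrite (_ : (fun w => _) = (@powR R ^~ (r / 2)) \o (fun w => dotmx (X w) (X w))).
  apply: measurableT_comp; first exact: measurable_powR.
  by apply: measurable_sum => i; apply: measurable_funM.
by apply/funext => w; rewrite /= eucl_powR.
Qed.

Lemma integrable_coord_mulmx (mu : {measure set T -> \bar R}) {m n} (B : 'M[R]_(m, n))
    (Z : T -> 'cV[R]_n) :
  (forall j, mu.-integrable setT (fun w => (Z w j ord0)%:E)) ->
  forall i, mu.-integrable setT (fun w => ((B *m Z w) i ord0)%:E).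
Proof.
move=> iZ i; under eq_fun do rewrite mxE -sumEFin.
by apply: integrable_sum => // j _; under eq_fun do rewrite EFinM; exact: integrableZl.
Qed.

Lemma integral_coord_mulmx (mu : {measure set T -> \bar R}) {m n} (B : 'M[R]_(m, n))
    (Z : T -> 'cV[R]_n) :
  (forall j, mu.-integrable setT (fun w => (Z w j ord0)%:E)) ->
  forall i, (\int[mu]_w ((B *m Z w) i ord0)%:E
             = \sum_j (B i j)%:E * \int[mu]_w (Z w j ord0)%:E)%E.
Proof.
move=> iZ i; under eq_integral do rewrite mxE -sumEFin.
rewrite integral_sum //; last by move=> j; under eq_fun do rewrite EFinM; exact: integrableZl.
by apply: eq_bigr => j _; under eq_integral do rewrite EFinM; rewrite integralZl.
Qed.

Lemma integrable_eucl_powR (mu : {measure set T -> \bar R}) {n} (X : T -> 'cV[R]_n)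
    (r : R) :
  (forall i, measurable_fun setT (fun w => X w i ord0)) ->
  (\int[mu]_w (eucl (X w) `^ r)%:E < +oo)%E ->
  mu.-integrable setT (fun w => (eucl (X w) `^ r)%:E).
Proof.
move=> mX Xr_fin; apply/integrableP; split.
  exact/measurable_EFinP/measurable_eucl_powR.
by under eq_integral do rewrite gee0_abs ?lee_fin ?powR_ge0 //.
Qed.

Lemma integrable_coord (mu : {finite_measure set T -> \bar R}) {n} (Z : T -> 'cV[R]_n)
    (r : R) : 1 <= r ->
  (forall j, measurable_fun setT (fun w => Z w j ord0)) ->
  mu.-integrable setT (fun w => (eucl (Z w) `^ r)%:E) ->
  forall j, mu.-integrable setT (fun w => (Z w j ord0)%:E).
Proof.
move=> r1 mZ iZr j.
apply: (le_integrable _ _ _ (integrableD _ (finite_measure_integrable_cst mu 1 _) iZr)) => //.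
  exact/measurable_EFinP.
move=> w _ /=; rewrite lee_fin [X in _ <= X]ger0_norm ?addr_ge0 ?powR_ge0 //.
apply: le_trans (normr_coord_le_eucl (Z w) j) _.
have [Z1|Z1] := lerP (eucl (Z w)) 1; first by rewrite ler_wpDr ?powR_ge0.
by rewrite ler_wpDl // le1r_powR // ltW.
Qed.

Lemma integral_affine_centered (P : probability T R) {m n} (B : 'M[R]_(m, n))
    (Z : T -> 'cV[R]_n) (X : T -> R) (k0 k1 : R) i :
  (forall j, P.-integrable setT (fun w => (Z w j ord0)%:E)) ->
  (forall j, (\int[P]_w (Z w j ord0)%:E = 0)%E) ->
  P.-integrable setT (fun w => (X w)%:E) ->
  (\int[P]_w (k0 + (B *m Z w) i ord0 + k1 * X w)%:E = k0%:E + k1%:E * \int[P]_w (X w)%:E)%E.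
Proof.
move=> iZ EZ iX; have iB := integrable_coord_mulmx P B Z iZ i.
under eq_integral do rewrite !EFinD EFinM.
rewrite integralD //; [|exact: integrableD (finite_measure_integrable_cst P k0 _) iB|];
  last exact: integrableZl.
rewrite integralD //; [|exact: finite_measure_integrable_cst].
have -> : (\int[P]_x k0%:E = k0%:E)%E.
  by rewrite integral_cst // -[RHS]mule1; congr (_ * _)%E; exact: probability_setT.
rewrite integral_coord_mulmx // integralZl //.
by rewrite big1 ?adde0 // => j _; rewrite EZ mule0.
Qed.

End integration.

Theorem lemma1 (R : realType) (dT : measure_display) (T : measurableType dT)
  (P : probability T R) (d q : nat) (r h0 : R)
  (Z : T -> 'cV[R]_q) (a : 'cV[R]_d) (A : 'M[R]_(d, q)) :
  2 <= r -> 0 < h0 ->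
  (forall i : 'I_q, measurable_fun setT (fun w => Z w i ord0)) ->
  (\int[P]_w ((eucl (Z w)) `^ r)%:E < +oo)%E ->
  (forall i : 'I_q, (\int[P]_w (Z w i ord0)%:E = 0)%E) ->
  forall h : R, 0 < h -> h < h0 ->
  (\int[P]_w ((eucl (a + Num.sqrt h *: (A *m Z w))) `^ r)%:E
   <= ((eucl a) `^ r * (1 + c1 r * h))%:E
      + (c2 r h0 * h * (opnorm A) `^ r)%:E * \int[P]_w ((eucl (Z w)) `^ r)%:E)%E.
Proof.
move=> r2 _ mZ Zr_fin EZ h h_gt0 hh0.
set k0 := eucl a `^ r * _; set k2 := c2 r h0 * h * _.
pose B := (r * eucl a `^ (r - 2)) *: (a^T *m (Num.sqrt h *: A)).
have r1 : 1 <= r by lra.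
have iZr := integrable_eucl_powR P Z r mZ Zr_fin.
have iZ := integrable_coord P Z r r1 mZ iZr.
have lin_eq w : r * dotmx a (Num.sqrt h *: (A *m Z w)) * eucl a `^ (r - 2)
    = (B *m Z w) ord0 ord0.
  by rewrite scalemxAl dotmx_mulmx /B -scalemxAl [RHS]mxE mulrAC.
apply: (@le_trans _ _ (\int[P]_w (k0 + (B *m Z w) ord0 ord0 + k2 * eucl (Z w) `^ r)%:E)%E).
  apply: ge0_le_integral => //.
  - by move=> w _; rewrite lee_fin powR_ge0.
  - apply/measurable_EFinP/measurable_eucl_powR => i.
    rewrite (_ : (fun w => _) = fun w => a i ord0 + ((Num.sqrt h *: A) *m Z w) i ord0).
      by apply: measurable_funD; [exact: measurable_cst | exact: measurable_coord_mulmx].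
    by apply/funext => w; rewrite scalemxAl [LHS]mxE.
  - apply/measurable_EFinP/measurable_funD; last first.
      by apply: measurable_funM; [exact: measurable_cst | exact: measurable_eucl_powR].
    by apply: measurable_funD; [exact: measurable_cst | exact: measurable_coord_mulmx].
  - move=> w _; rewrite lee_fin -lin_eq; apply: eucl_add_sqrt_mulmx_powR_le => //.
    by rewrite !ltW.
by rewrite integral_affine_centered.
Qed.
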